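(* Let $\varphi\colon A^*\to A^*$ be a non-erasing substitution extending over $a\in A$, let $I_\varphi$ be the set of $\varphi$-growing letters, and suppose the set $B_\varphi$ of $\varphi$-bounded factors of $\varphi^{\infty}(a)$ (including the empty word) is finite. Let $C$ be the finite alphabet of symbols $[twt']$ with $t,t'\in I_\varphi$, $w\in B_\varphi$ and $twt'$ a factor of $\varphi^{\infty}(a)$, and define $\psi\colon C^*\to C^*$ by $\psi([twt'])=[t_1w_1t_2][t_2w_2t_3]\cdots[t_kw_kt_{k+1}]$, where $\varphi(tw)=w_0t_1w_1t_2\cdots t_kw_k'$ with $t_i\in I_\varphi$ and $w_i,w_k'\in B_\varphi$, $\varphi(t')$ begins with $w_k''t_{k+1}$ with $t_{k+1}\in I_\varphi$, $w_k''\in B_\varphi$, and $w_k=w_k'w_k''$. Then every letter of $C$ is $\psi$-growing.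
   Context: A substitution is non-erasing if no letter is mapped to the empty word. $\varphi$ extends over $a$ if $\varphi(a)=av$ with $\varphi^k(v)\neq\varepsilon$ for all $k$, and then $\varphi^{\infty}(a)=av\varphi(v)\varphi^2(v)\cdots$. A finite word $w$ is $\varphi$-bounded if the sequence $(|\varphi^n(w)|)_n$ is bounded (equivalently $w,\varphi(w),\varphi^2(w),\dots$ is ultimately periodic), and $\varphi$-growing otherwise; a letter $c\in C$ is $\psi$-growing if $|\psi^n(c)|\to\infty$. *)

From mathcomp Require Import all_boot.
Set Implicit Arguments. Unset Strict Implicit. Unset Printing Implicit Defensive.

Section Subst.
Variable A : finType.
Variable phi : A -> seq A.

Definition phiw (w : seq A) : seq A := flatten (map phi w).

Definition non_erasing : Prop := forall c, phi c <> [::].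

Definition extends_over (a : A) : Prop :=
  exists v, phi a = a :: v /\ forall k, iter k phiw v <> [::].

(* phi^oo(a): its n-th letter is the n-th letter of phi^(n+1)(a)
   (which has length >= n+2 when phi extends over a). *)
Definition phi_inf (a : A) (n : nat) : A := nth a (iter n.+1 phiw [:: a]) n.

Definition factor_of (x : nat -> A) (w : seq A) : Prop :=
  exists i, forall j, j < size w -> x (i + j) = nth (x i) w j.

Definition bounded (w : seq A) : Prop :=
  exists M, forall n, size (iter n phiw w) <= M.

Definition growing_letter (c : A) : Prop :=
  forall M, exists N, forall n, N <= n -> M <= size (iter n phiw [:: c]).

(* Cutting a word x at the occurrences of letters of I lying in its first
   k positions: each growing occurrence t_i (position p < k) gives the symbol
   t_i w_i t_(i+1), running up to and including the next occurrence of a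
   letter of I in x. *)
Definition cut (I : pred A) (d : A) (x : seq A) (k : nat) : seq (seq A) :=
  [seq take (find I (drop p.+1 x)).+2 (drop p x) | p <- iota 0 k & I (nth d x p)].

(* psi on a symbol [t w t'] (represented as the word t :: w ++ [:: t']):
   cut phi(t w) phi(t') at the growing letters of phi(t w). *)
Definition psi_sym (I : pred A) (c : seq A) : seq (seq A) :=
  match c with
  | [::] => [::]
  | x0 :: s => let u := phiw (belast x0 s) in cut I x0 (u ++ phi (last x0 s)) (size u)
  end.

Definition psiw (I : pred A) (cs : seq (seq A)) : seq (seq A) :=
  flatten (map (psi_sym I) cs).

Definition psi_growing (I : pred A) (c : seq A) : Prop :=
  forall M, exists N, forall n, N <= n -> M <= size (iter n (psiw I) [:: c]).

Definition in_C (I : pred A) (a : A) (c : seq A) : Prop :=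
  exists t w t', [/\ c = t :: w ++ [:: t'], t \in I, t' \in I,
                  factor_of (phi_inf a) w /\ bounded w & factor_of (phi_inf a) c].

End Subst.

From mathcomp Require Import all_boot zify.
From Stdlib Require Import Classical.
Set Implicit Arguments. Unset Strict Implicit. Unset Printing Implicit Defensive.

(* The letters split into growing letters (the set I) and bounded ones; a
   bounded letter only produces bounded letters, and a growing letter always
   produces some growing letter.  Call the "skeleton" of a word over C the
   sequence of growing letters occurring in the bodies t w of its symbols.
   The substitution psi is designed so that, on symbols ending with a growing
   letter, it acts on skeletons as phi followed by erasure of the bounded
   letters, and produces exactly one symbol per skeleton letter.  Hence
   |psi^n([t w t'])| is the number of growing letters of phi^n(t w).

   Each phi^n(t) is a
   factor of phi^oo(a); its factors free of growing letters are bounded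
   factors of phi^oo(a), hence lie in the finite set B and have length at
   most L.  A word whose growing-free factors have length at most L has length
   at most (L+1) * (number of growing letters) + L, and |phi^n(t)| tends to
   infinity since t is growing; so the count does too. *)

Lemma filter_hasN (T : Type) (a : pred T) (s : seq T) : ~~ has a s -> filter a s = [::].
Proof. by elim: s => //= x s IH; case: (a x) => //= /IH. Qed.

Lemma hasN_take_find (T : Type) (a : pred T) (s : seq T) : ~~ has a (take (find a s) s).
Proof. by rewrite has_take_leq ?find_size ?ltnn. Qed.

Section Morphism.
Variables (A : finType) (phi : A -> seq A).

Lemma phiw_cat (u v : seq A) : phiw phi (u ++ v) = phiw phi u ++ phiw phi v.
Proof. by rewrite /phiw map_cat flatten_cat. Qed.

Lemma phiw1 (x : A) : phiw phi [:: x] = phi x.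
Proof. by rewrite /phiw /= cats0. Qed.

Lemma iter_phiw_cat n (u v : seq A) :
  iter n (phiw phi) (u ++ v) = iter n (phiw phi) u ++ iter n (phiw phi) v.
Proof. by elim: n => //= n ->; rewrite phiw_cat. Qed.

End Morphism.

Section Growth.
Variables (A : finType) (phi : A -> seq A) (I : pred A).
Hypothesis phi_ne : non_erasing phi.
Hypothesis I_growing : forall c, c \in I <-> growing_letter phi c.

Lemma size_phiw (u : seq A) : size u <= size (phiw phi u).
Proof.
elim: u => // x u IH; rewrite /phiw /= size_cat -/(phiw phi u).
have : 0 < size (phi x) by case E: (phi x) => //; have := @phi_ne x; rewrite E.
lia.
Qed.

Lemma size_iter_phiw_mono n m (u : seq A) : n <= m ->
  size (iter n (phiw phi) u) <= size (iter m (phiw phi) u).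
Proof.
move=> /subnK <-; elim: (m - n) => //= k IH.
exact: leq_trans IH (size_phiw _).
Qed.

(* A letter that is not growing is bounded (the lengths being nondecreasing,
   failing to grow means staying below some bound). *)
Lemma nongrowing_letter_bounded (b : A) : ~~ I b -> bounded phi [:: b].
Proof.
move=> Ib; apply: NNPP => unbounded; move/negP: Ib; apply; apply/I_growing => M.
apply: NNPP => never; apply: unbounded; exists M => n.
rewrite leqNgt; apply/negP => big; apply: never; exists n => m nm.
exact: leq_trans (ltnW big) (size_iter_phiw_mono _ nm).
Qed.

Lemma bounded_cat (u v : seq A) : bounded phi u -> bounded phi v -> bounded phi (u ++ v).
Proof.
move=> [M1 H1] [M2 H2]; exists (M1 + M2) => n.
by rewrite iter_phiw_cat size_cat leq_add.
Qed.

Lemma nongrowing_word_bounded (u : seq A) : all (predC I) u -> bounded phi u.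
Proof.
elim: u => [_|x u IH /andP[Ix Iu]].
  by exists 0 => n; suff -> : iter n (phiw phi) [::] = [::] by []; elim: n => //= n ->.
by rewrite -cat1s; apply: bounded_cat; [apply: nongrowing_letter_bounded | apply: IH].
Qed.

(* The image of a bounded letter contains no growing letter, since
   phi^(n+1)(b) contains phi^n(z) for every letter z of phi(b). *)
Lemma nongrowing_image (b : A) : ~~ I b -> all (predC I) (phi b).
Proof.
move=> Ib; apply/allP => z zb /=; apply: contra Ib => Iz.
apply/I_growing => M; have [N HN] := (I_growing z).1 Iz M.
exists N.+1 => -[//|n]; rewrite ltnS => Nn.
rewrite iterSr phiw1; case/splitPr: zb => l r.
rewrite -cat1s !iter_phiw_cat !size_cat addnCA.
exact: leq_trans (HN n Nn) (leq_addr _ _).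
Qed.

Lemma growing_image (t : A) : I t -> has I (phi t).
Proof.
move=> It; apply: contraT; rewrite -all_predC => /nongrowing_word_bounded [M HM].
have [N HN] := (I_growing t).1 It M.+1.
by have := HN N.+1 (leqnSn N); rewrite iterSr phiw1 leqNgt ltnS HM.
Qed.

Lemma filter_growing_phiw (w : seq A) :
  filter I (phiw phi w) = filter I (phiw phi (filter I w)).
Proof.
elim: w => //= x w IH; case Ix: (I x); rewrite /= !filter_cat IH //.
by rewrite filter_hasN // -all_predC nongrowing_image ?Ix.
Qed.

End Growth.

Section Psi.
Variables (A : finType) (phi : A -> seq A) (I : pred A).
Hypothesis phi_ne : non_erasing phi.
Hypothesis I_growing : forall c, c \in I <-> growing_letter phi c.

Definition body (c : seq A) : seq A := if c is x0 :: s then belast x0 s else [::].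

(* Symbols of C end with a growing letter. *)
Definition ends_growing (c : seq A) : bool := if c is x0 :: s then I (last x0 s) else false.

Definition skeleton (cs : seq (seq A)) : seq A := flatten [seq filter I (body c) | c <- cs].

Lemma skeleton_cat (cs ds : seq (seq A)) : skeleton (cs ++ ds) = skeleton cs ++ skeleton ds.
Proof. by rewrite /skeleton map_cat flatten_cat. Qed.

Lemma cut_piece (d : A) (x : seq A) p :
  p < size x -> I (nth d x p) -> has I (drop p.+1 x) ->
  let c := take (find I (drop p.+1 x)).+2 (drop p x) in
  ends_growing c /\ filter I (body c) = [:: nth d x p].
Proof.
move=> px Ip Ihas; rewrite (drop_nth d px) /=.
have Hj : find I (drop p.+1 x) < size (drop p.+1 x) by rewrite -has_find.
rewrite (take_nth d Hj) /= belast_rcons last_rcons nth_find //= Ip.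
by rewrite filter_hasN ?hasN_take_find.
Qed.

Lemma cut_spec (d : A) (x : seq A) k : k <= size x -> has I (drop k x) ->
  [/\ all ends_growing (cut I d x k), skeleton (cut I d x k) = filter I (take k x) &
      size (cut I d x k) = size (filter I (take k x))].
Proof.
move=> kx Ihas; rewrite /cut.
set ps := [seq p <- iota 0 k | I (nth d x p)].
set piece := fun p => take (find I (drop p.+1 x)).+2 (drop p x).
have Hpiece p : p \in ps -> ends_growing (piece p) /\ filter I (body (piece p)) = [:: nth d x p].
  rewrite mem_filter mem_iota add0n => /andP[Ip /= pk]; apply: cut_piece => //.
  - exact: leq_trans pk kx.
  - move: Ihas; rewrite -(subnK pk) -drop_drop -{2}(cat_take_drop (k - p.+1) (drop p.+1 x)).
    by rewrite has_cat => ->; rewrite orbT.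
have Hfilter : filter I (take k x) = map (nth d x) ps by rewrite /ps -filter_map map_nth_iota0.
split.
- by apply/allP => c /mapP [p /Hpiece [] ? _ ->].
- rewrite /skeleton -map_comp Hfilter -[map (nth d x) ps]flatten_seq1 -map_comp.
  by apply/congr1/eq_in_map => p /Hpiece [].
- by rewrite Hfilter !size_map.
Qed.

Lemma psi_sym_spec (c : seq A) : ends_growing c ->
  [/\ all ends_growing (psi_sym phi I c), skeleton (psi_sym phi I c) = filter I (phiw phi (body c)) &
      size (psi_sym phi I c) = size (filter I (phiw phi (body c)))].
Proof.
case: c => // x0 s /= Ilast.
have := cut_spec x0 (x := phiw phi (belast x0 s) ++ phi (last x0 s))
                    (k := size (phiw phi (belast x0 s))).
rewrite size_cat leq_addr drop_size_cat // take_size_cat //; apply => //.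
exact: growing_image.
Qed.

Lemma psiw_spec (cs : seq (seq A)) : all ends_growing cs ->
  [/\ all ends_growing (psiw phi I cs), skeleton (psiw phi I cs) = filter I (phiw phi (skeleton cs)) &
      size (psiw phi I cs) = size (skeleton (psiw phi I cs))].
Proof.
elim: cs => [|c cs IH] //= /andP[Ic Ics].
have [IH1 IH2 IH3] := IH Ics; have [P1 P2 P3] := psi_sym_spec Ic.
have -> : psiw phi I (c :: cs) = psi_sym phi I c ++ psiw phi I cs by [].
have -> : skeleton (c :: cs) = filter I (body c) ++ skeleton cs by [].
rewrite all_cat P1 IH1 !skeleton_cat size_cat P2 IH2 P3 IH3 size_cat.
by rewrite phiw_cat filter_cat -(filter_growing_phiw I_growing) IH2.
Qed.

Lemma size_iter_psiw (c : seq A) n : ends_growing c ->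
  size (iter n.+1 (psiw phi I) [:: c]) = count I (iter n.+1 (phiw phi) (body c)).
Proof.
move=> Ic.
have iter_spec m : all ends_growing (iter m (psiw phi I) [:: c]) /\
    skeleton (iter m (psiw phi I) [:: c]) = filter I (iter m (phiw phi) (body c)).
  elim: m => [|m [IH1 IH2]] /=; first by rewrite Ic /skeleton /= cats0.
  have [P1 P2 _] := psiw_spec IH1.
  by rewrite P1 P2 IH2 -(filter_growing_phiw I_growing).
have [_ _ ->] := psiw_spec (iter_spec n).1.
by rewrite -iterS (iter_spec n.+1).2 size_filter.
Qed.

End Psi.

Definition runs_le (T : Type) (a : pred T) (L : nat) (u : seq T) : Prop :=
  forall l s r, u = l ++ s ++ r -> ~~ has a s -> size s <= L.

(* Such a word has at most L letters before each a-letter and after the last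
   one; the proof bounds size u by (L+1) count a u + (length of the first run). *)
Lemma size_le_count_runs (T : Type) (a : pred T) (L : nat) (u : seq T) :
  runs_le a L u -> size u <= count a u * L.+1 + L.
Proof.
have find_le w : runs_le a L w -> find a w <= L.
  move=> Hw; have := Hw [::] (take (find a w) w) (drop (find a w) w).
  by rewrite cat_take_drop size_takel ?find_size //; apply; rewrite ?hasN_take_find.
move=> Hu; apply: (@leq_trans (count a u * L.+1 + find a u)); last first.
  by rewrite leq_add2l find_le.
elim: u Hu => //= x u IH Hxu.
have Hu : runs_le a L u by move=> l s r E; apply: (Hxu (x :: l)); rewrite E.
have := IH Hu; have := find_le u Hu; case: (a x) => /=; lia.
Qed.

Section FixedPoint.
Variables (A : finType) (phi : A -> seq A) (a : A) (v : seq A).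
Hypothesis phi_a : phi a = a :: v.
Hypothesis v_nonvanishing : forall k, iter k (phiw phi) v <> [::].

Definition pref (n : nat) : seq A := iter n (phiw phi) [:: a].

Lemma pref_succ n : pref n.+1 = pref n ++ iter n (phiw phi) v.
Proof.
elim: n => [|n IH]; first by rewrite /pref /= phiw1 phi_a.
by rewrite (_ : pref n.+2 = phiw phi (pref n.+1)) // {1}IH phiw_cat.
Qed.

(* The prefixes grow at least by one letter at each step, as phi^n(v) <> []. *)
Lemma size_pref n : n < size (pref n).
Proof.
elim: n => // n IH; rewrite pref_succ size_cat.
have : 0 < size (iter n (phiw phi) v).
  by case E: (iter n (phiw phi) v) => //; have := @v_nonvanishing n; rewrite E.
lia.
Qed.

Lemma pref_prefix n m : n <= m -> exists r, pref m = pref n ++ r.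
Proof.
move=> /subnK <-; elim: (m - n) => [|k [r IH]]; first by exists [::]; rewrite cats0.
by exists (r ++ iter (k + n) (phiw phi) v); rewrite addSn pref_succ IH catA.
Qed.

Lemma nth_pref n i : i < size (pref n) -> phi_inf phi a i = nth a (pref n) i.
Proof.
move=> i_n; rewrite /phi_inf -/(pref i.+1).
have [r1 E1] := pref_prefix (leq_maxl n i.+1).
have [r2 E2] := pref_prefix (leq_maxr n i.+1).
have i_i1 : i < size (pref i.+1) by have := size_pref i.+1; lia.
have E : nth a (pref (maxn n i.+1)) i = nth a (pref i.+1) i by rewrite E2 nth_cat i_i1.
by rewrite -E E1 nth_cat i_n.
Qed.

Definition pref_factor (w : seq A) : Prop := exists n l r, pref n = l ++ w ++ r.

Lemma pref_factor_factor_of (w : seq A) : pref_factor w -> factor_of (phi_inf phi a) w.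
Proof.
move=> [n [l [r E]]]; exists (size l) => j jw.
have lj : size l + j < size (pref n) by rewrite E !size_cat; lia.
rewrite (nth_pref lj) E nth_cat ltnNge leq_addr /= addKn nth_cat jw.
exact: set_nth_default.
Qed.

Lemma factor_of_pref_factor (w : seq A) : factor_of (phi_inf phi a) w -> pref_factor w.
Proof.
move=> [i Hi]; set n := i + size w; have := size_pref n => n_size.
exists n, (take i (pref n)), (drop (size w) (drop i (pref n))).
suff E : take (size w) (drop i (pref n)) = w by rewrite -{1}E !cat_take_drop.
apply: (@eq_from_nth _ a) => [|j]; rewrite size_take size_drop.
  by case: ifP => //; lia.
move=> jw; have jw' : j < size w by move: jw; case: ifP; lia.
by rewrite nth_take // nth_drop -(@nth_pref n); [rewrite Hi // (set_nth_default a) | lia].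
Qed.

Lemma pref_factor_iter m (w : seq A) : pref_factor w -> pref_factor (iter m (phiw phi) w).
Proof.
move=> [n [l [r E]]]; exists (m + n), (iter m (phiw phi) l), (iter m (phiw phi) r).
by rewrite /pref iterD -/(pref n) E !iter_phiw_cat.
Qed.

Lemma pref_factor_sub (l w r : seq A) : pref_factor (l ++ w ++ r) -> pref_factor w.
Proof. by move=> [n [l' [r' E]]]; exists n, (l' ++ l), (r ++ r'); rewrite E -!catA. Qed.

End FixedPoint.

(* Under the finiteness hypothesis on bounded factors, a growing letter
   occurring in phi^oo(a) produces arbitrarily many growing letters: the
   growing-free factors of phi^n(t) lie in the finite set sB. *)
Lemma growing_letters_multiply (A : finType) (phi : A -> seq A) (a : A) (v : seq A)
    (I : pred A) (sB : seq (seq A)) :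
  non_erasing phi -> phi a = a :: v -> (forall k, iter k (phiw phi) v <> [::]) ->
  (forall c, c \in I <-> growing_letter phi c) ->
  (forall w, factor_of (phi_inf phi a) w -> bounded phi w -> w \in sB) ->
  forall t, pref_factor phi a [:: t] -> I t ->
  forall M, exists N, forall n, N <= n -> M <= count I (iter n (phiw phi) [:: t]).
Proof.
move=> phi_ne phi_a v_nonvanishing I_growing B_finite t t_factor It M.
set L := \max_(s <- sB) size s.
have runs m : runs_le I L (iter m (phiw phi) [:: t]).
  move=> l s r E Is; apply: (leq_bigmax_seq (F := size)) => //; apply: B_finite.
  - apply: (pref_factor_factor_of phi_a v_nonvanishing); apply: (pref_factor_sub (l := l) (r := r)).
    by rewrite -E; apply: pref_factor_iter.
  - by apply: (nongrowing_word_bounded phi_ne I_growing); rewrite all_predC.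
have [N HN] := (I_growing t).1 It (M * L.+1 + L).
exists N => n Nn; have := leq_trans (HN n Nn) (size_le_count_runs (runs n)).
by rewrite leq_add2r leq_pmul2r.
Qed.

(* psi^(n+1)([t w t']) has as many symbols as phi^(n+1)(t w) has growing
   letters, and already phi^(n+1)(t) has arbitrarily many. *)
Theorem proposition2 (A : finType) (phi : A -> seq A) (a : A) (I : pred A) :
  non_erasing phi ->
  extends_over phi a ->
  (forall c, c \in I <-> growing_letter phi c) ->
  (exists sB : seq (seq A), forall w,
      factor_of (phi_inf phi a) w -> bounded phi w -> w \in sB) ->
  forall c : seq A, in_C phi I a c -> psi_growing phi I c.
Proof.
move=> phi_ne [v [phi_a v_nonvanishing]] I_growing [sB B_finite] c.
move=> [t [w [t' [-> It It' _ c_factor]]]].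
have t_factor : pref_factor phi a [:: t].
  apply: (pref_factor_sub (l := [::]) (r := w ++ [:: t'])).
  exact: (factor_of_pref_factor phi_a v_nonvanishing c_factor).
have c_ends : ends_growing I (t :: w ++ [:: t']) by rewrite /= cats1 last_rcons.
have c_body : body (t :: w ++ [:: t']) = [:: t] ++ w by rewrite /= cats1 belast_rcons.
move=> M; have [N HN] :=
  growing_letters_multiply phi_ne phi_a v_nonvanishing I_growing B_finite t_factor It M.
exists N.+1 => -[//|n] Nn.
rewrite (size_iter_psiw phi_ne I_growing n c_ends) c_body iter_phiw_cat count_cat.
exact: leq_trans (HN n.+1 (ltnW Nn)) (leq_addr _ _).
Qed.
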